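(* Let $q\neq0$ and $r$ be real numbers. As formal power series in $t$, \[ \sum_{n=0}^{\infty} \hat c_n^q(r)\,\frac{t^n}{n!}=\frac{q\,(1+qt)^{r/q}}{\ln(1+qt)}\Big(1-(1+qt)^{-1/q}\Big). \] In particular, for $r=0$, \[ \sum_{n=0}^{\infty} \hat c_n^q(0)\,\frac{t^n}{n!}=\frac{q}{\ln(1+qt)}\Big(1-(1+qt)^{-1/q}\Big). \]
   Context: For a real number $q\neq 0$ and an integer $n\ge0$, write $(y|q)_n=\prod_{j=0}^{n-1}(y-jq)$, with $(y|q)_0=1$. The Cauchy polynomials with a $q$ parameter of the second kind are $\hat c_n^q(z)=\int_0^1 (-x+z|q)_n\,dx$. In the formula, $(1+qt)^{a}=\exp(a\ln(1+qt))$ with $\ln(1+qt)=\sum_{m\ge1}(-1)^{m-1}(qt)^m/m$. The right-hand side is a formal power series, since $\big(1-(1+qt)^{-1/q}\big)/\ln(1+qt)$ is one. *)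

From Stdlib Require Import Reals Lra List Factorial.
Import ListNotations.
Open Scope R_scope.

(* Generalized falling factorial (y|q)_n = prod_{j=0}^{n-1} (y - j q). *)
Fixpoint gfact (y q : R) (n : nat) : R :=
  match n with
  | O => 1
  | S m => gfact y q m * (y - INR m * q)
  end.

Lemma gfact_integrable (q z : R) (n : nat) :
  Riemann_integrable (fun x => gfact (- x + z) q n) 0 1.
Proof.
  apply continuity_implies_RiemannInt; [lra|].
  intros x _. revert x. change (continuity (fun x => gfact (- x + z) q n)).
  induction n as [|n IH]; simpl.
  - apply continuity_const. intros a b; reflexivity.
  - apply continuity_mult; [exact IH|].
    apply continuity_minus.
    + apply continuity_plus.
      * apply continuity_opp, derivable_continuous, derivable_id.
      * apply continuity_const. intros a b; reflexivity.
    + apply continuity_const. intros a b; reflexivity.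
Qed.

(* Cauchy polynomials with a q parameter of the second kind:
   hat c_n^q(z) = int_0^1 (-x+z|q)_n dx. *)
Definition chat (q : R) (n : nat) (z : R) : R :=
  RiemannInt (gfact_integrable q z n).

Definition fps := nat -> R.

Definition fps_one : fps := fun n => match n with O => 1 | _ => 0 end.
Definition fps_add (A B : fps) : fps := fun n => A n + B n.
Definition fps_opp (A : fps) : fps := fun n => - A n.
Definition fps_scale (c : R) (A : fps) : fps := fun n => c * A n.
Definition fps_mul (A B : fps) : fps :=
  fun n => sum_f_R0 (fun k => A k * B (n - k)%nat) n.
Fixpoint fps_pow (A : fps) (k : nat) : fps :=
  match k with O => fps_one | S j => fps_mul A (fps_pow A j) end.

(* Formal exponential of a series with zero constant term:
   exp(S) = sum_k S^k / k!; only k <= n contributes to coefficient n. *)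
Definition fps_exp (S : fps) : fps :=
  fun n => sum_f_R0 (fun k => fps_pow S k n / INR (fact k)) n.

Fixpoint fps_inv_aux (A : fps) (n : nat) : list R :=
  match n with
  | O => [/ A O]
  | S m => let l := fps_inv_aux A m in
           l ++ [ - / A O * sum_f_R0 (fun j => A (S j) * nth (m - j) l 0) m ]
  end.
Definition fps_inv (A : fps) : fps := fun n => nth n (fps_inv_aux A n) 0.

(* Shift: A / t, for A with zero constant term. *)
Definition fps_shift (A : fps) : fps := fun n => A (S n).

(* Quotient A / B of series with A_0 = B_0 = 0 and B_1 <> 0:
   (A/t) * (B/t)^{-1}. *)
Definition fps_div (A B : fps) : fps := fps_mul (fps_shift A) (fps_inv (fps_shift B)).

Definition fps_ln1p (q : R) : fps :=
  fun m => match m with O => 0 | S k => (-1) ^ k * q ^ m / INR m end.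

Definition fps_powr (q a : R) : fps := fps_exp (fps_scale a (fps_ln1p q)).

Definition egf_chat (q r : R) : fps := fun n => chat q n r / INR (fact n).

(* Write E_c for the exponential generating function of (c|q)_n.  Its defining
   recursion says exactly that E_c is the solution of (1+qt) E' = c E with E(0) = 1.
   Since (1+qt) ln(1+qt)' = q, the series exp((c/q) ln(1+qt)) solves the same
   equation, whence (1+qt)^a = E_(aq) and E_c E_d = E_(c+d).  Differentiating in c,
   the series D_c of the coefficients d/dc (c|q)_n / n! solves (1+qt) D' = E_c + c D,
   and so does ln(1+qt) E_c / q; hence ln(1+qt) E_c = q D_c.  Integrating this
   over c = r - x, x in [0,1], gives ln(1+qt) sum_n chat_n(r) t^n/n! = q (E_r - E_(r-1))
   = q E_r (1 - E_(-1)), and dividing by ln(1+qt) yields the identity. *)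

From Stdlib Require Import Reals Lra Lia List Factorial FunctionalExtensionality.
From Coquelicot Require Import Coquelicot.
Open Scope R_scope.

Lemma sum_f_R0_rev (f : nat -> R) (n : nat) :
  sum_f_R0 (fun k => f (n - k)%nat) n = sum_f_R0 f n.
Proof.
  induction n as [|n IH]; [reflexivity|].
  rewrite decomp_sum, tech5 by lia. simpl pred.
  replace (S n - 0)%nat with (S n) by lia.
  rewrite <- IH, (sum_eq _ (fun k => f (n - k)%nat)) by (intros; f_equal; lia).
  ring.
Qed.

Lemma sum_f_R0_triangle (f : nat -> nat -> R) (n : nat) :
  sum_f_R0 (fun i => sum_f_R0 (fun j => f i j) i) n =
  sum_f_R0 (fun j => sum_f_R0 (fun k => f (j + k)%nat j) (n - j)) n.
Proof.
  induction n as [|n IH]; [reflexivity|].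
  rewrite tech5, IH, (tech5 (fun j => sum_f_R0 _ (S n - j))), Nat.sub_diag.
  rewrite (sum_eq (fun j => sum_f_R0 (fun k => f (j + k)%nat j) (S n - j))
             (fun j => sum_f_R0 (fun k => f (j + k)%nat j) (n - j) + f (S n) j)).
  - rewrite plus_sum, tech5. simpl. rewrite Nat.add_0_r. symmetry; apply Rplus_assoc.
  - intros j Hj. replace (S n - j)%nat with (S (n - j)) by lia.
    rewrite tech5. do 3 f_equal. lia.
Qed.

Lemma sum_f_R0_swap (f : nat -> nat -> R) (n m : nat) :
  sum_f_R0 (fun i => sum_f_R0 (fun j => f i j) m) n =
  sum_f_R0 (fun j => sum_f_R0 (fun i => f i j) n) m.
Proof.
  induction n as [|n IH]; simpl; [reflexivity|].
  rewrite IH, <- plus_sum. reflexivity.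
Qed.

Lemma sum_f_R0_zero_tail (f : nat -> R) (m n : nat) :
  (m <= n)%nat -> (forall i, (m < i <= n)%nat -> f i = 0) ->
  sum_f_R0 f n = sum_f_R0 f m.
Proof.
  intros Hmn Hf. induction n as [|n IH].
  - replace m with 0%nat by lia. reflexivity.
  - destruct (Nat.eq_dec m (S n)) as [->|Hne]; [reflexivity|].
    rewrite tech5, IH, Hf by (lia || (intros; apply Hf; lia)). ring.
Qed.

Lemma fps_mulC (A B : fps) : fps_mul A B = fps_mul B A.
Proof.
  extensionality n. unfold fps_mul. rewrite <- sum_f_R0_rev.
  apply sum_eq; intros i Hi. replace (n - (n - i))%nat with i by lia. ring.
Qed.

Lemma fps_mulA (A B C : fps) : fps_mul (fps_mul A B) C = fps_mul A (fps_mul B C).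
Proof.
  extensionality n. unfold fps_mul.
  rewrite (sum_eq _ (fun i => sum_f_R0 (fun j => A j * B (i - j)%nat * C (n - i)%nat) i))
    by (intros; rewrite Rmult_comm, scal_sum; apply sum_eq; intros; ring).
  rewrite sum_f_R0_triangle. apply sum_eq; intros j Hj.
  rewrite scal_sum. apply sum_eq; intros k Hk.
  replace (j + k - j)%nat with k by lia. replace (n - (j + k))%nat with (n - j - k)%nat by lia.
  ring.
Qed.

Lemma fps_mul1l (A : fps) : fps_mul fps_one A = A.
Proof.
  extensionality n. unfold fps_mul. destruct n as [|n]; [simpl; ring|].
  rewrite decomp_sum by lia. simpl.
  rewrite (sum_eq _ (fun _ => 0)), sum_cte by (intros; ring). ring.
Qed.

Lemma fps_mul1r (A : fps) : fps_mul A fps_one = A.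
Proof. rewrite fps_mulC; apply fps_mul1l. Qed.

Lemma fps_mulDl (A B C : fps) :
  fps_mul (fps_add A B) C = fps_add (fps_mul A C) (fps_mul B C).
Proof.
  extensionality n. unfold fps_mul, fps_add. rewrite <- plus_sum.
  apply sum_eq; intros; ring.
Qed.

Lemma fps_mulDr (A B C : fps) :
  fps_mul A (fps_add B C) = fps_add (fps_mul A B) (fps_mul A C).
Proof. rewrite !(fps_mulC A). apply fps_mulDl. Qed.

Lemma fps_mulZl (c : R) (A B : fps) :
  fps_mul (fps_scale c A) B = fps_scale c (fps_mul A B).
Proof.
  extensionality n. unfold fps_mul, fps_scale. rewrite scal_sum.
  apply sum_eq; intros; ring.
Qed.

Lemma fps_mulZr (c : R) (A B : fps) :
  fps_mul A (fps_scale c B) = fps_scale c (fps_mul A B).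
Proof. rewrite !(fps_mulC A). apply fps_mulZl. Qed.

Lemma fps_mulNr (A B : fps) : fps_mul A (fps_opp B) = fps_opp (fps_mul A B).
Proof.
  replace (fps_opp B) with (fps_scale (-1) B)
    by (extensionality n; unfold fps_opp, fps_scale; ring).
  rewrite fps_mulZr. extensionality n. unfold fps_opp, fps_scale. ring.
Qed.

Lemma fps_mul0r (A : fps) : fps_mul A (fun _ => 0) = (fun _ => 0).
Proof.
  extensionality n. unfold fps_mul.
  rewrite (sum_eq _ (fun _ => 0)), sum_cte by (intros; ring). ring.
Qed.

Lemma fps_mul_shift (A B : fps) :
  B O = 0 -> fps_mul A (fps_shift B) = fps_shift (fps_mul A B).
Proof.
  intro HB. extensionality n. unfold fps_mul, fps_shift.
  rewrite tech5, Nat.sub_diag, HB, Rmult_0_r, Rplus_0_r.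
  apply sum_eq; intros i Hi. replace (S n - i)%nat with (S (n - i)) by lia. reflexivity.
Qed.

Lemma fps_pow_lt (G : fps) (k m : nat) :
  G O = 0 -> (m < k)%nat -> fps_pow G k m = 0.
Proof.
  intros HG. revert m. induction k as [|k IH]; intros m Hm; [lia|].
  simpl. unfold fps_mul.
  rewrite (sum_eq _ (fun _ => 0)), sum_cte; [ring|].
  intros [|i] Hi; [rewrite HG; ring|]. rewrite IH by lia. ring.
Qed.

Lemma length_fps_inv_aux (A : fps) (n : nat) : length (fps_inv_aux A n) = S n.
Proof. induction n as [|n IH]; simpl; [reflexivity|]. rewrite length_app, IH. simpl. lia. Qed.

Lemma nth_fps_inv_aux (A : fps) (n k : nat) :
  (k <= n)%nat -> nth k (fps_inv_aux A n) 0 = fps_inv A k.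
Proof.
  unfold fps_inv. induction n as [|n IH]; intros Hk.
  - replace k with 0%nat by lia. reflexivity.
  - destruct (Nat.eq_dec k (S n)) as [->|Hne]; [reflexivity|].
    simpl fps_inv_aux. rewrite app_nth1 by (rewrite length_fps_inv_aux; lia). apply IH; lia.
Qed.

Lemma fps_invS (A : fps) (m : nat) :
  fps_inv A (S m) = - / A O * sum_f_R0 (fun j => A (S j) * fps_inv A (m - j)%nat) m.
Proof.
  unfold fps_inv at 1. simpl fps_inv_aux.
  rewrite app_nth2, length_fps_inv_aux, Nat.sub_diag by (rewrite length_fps_inv_aux; lia).
  simpl. f_equal. apply sum_eq; intros j Hj. rewrite nth_fps_inv_aux by lia. reflexivity.
Qed.

Lemma fps_mul_inv_r (A : fps) : A O <> 0 -> fps_mul A (fps_inv A) = fps_one.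
Proof.
  intro HA. extensionality n. unfold fps_mul. destruct n as [|n].
  - simpl. unfold fps_inv. simpl. field. exact HA.
  - rewrite decomp_sum by lia. simpl pred. rewrite Nat.sub_0_r, fps_invS. simpl.
    field. exact HA.
Qed.

Lemma fps_mulIr (A B C : fps) : C O <> 0 -> fps_mul A C = fps_mul B C -> A = B.
Proof.
  intros HC HAB.
  rewrite <- (fps_mul1r A), <- (fps_mul1r B), <- (fps_mul_inv_r C HC), <- !fps_mulA, HAB.
  reflexivity.
Qed.

Definition fps_deriv (A : fps) : fps := fun n => INR (S n) * A (S n).

Definition fps_mul_1pqt (q : R) (A : fps) : fps :=
  fun n => match n with O => A O | S m => A (S m) + q * A m end.

Lemma fps_deriv_mul (A B : fps) :
  fps_deriv (fps_mul A B) = fps_add (fps_mul (fps_deriv A) B) (fps_mul A (fps_deriv B)).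
Proof.
  extensionality n. unfold fps_deriv, fps_add, fps_mul.
  transitivity (sum_f_R0 (fun k => INR k * A k * B (S n - k)%nat) (S n)
     + sum_f_R0 (fun k => A k * (INR (S n - k) * B (S n - k)%nat)) (S n)).
  { rewrite <- plus_sum, scal_sum. apply sum_eq; intros i Hi.
    rewrite minus_INR by exact Hi. ring. }
  f_equal.
  - rewrite decomp_sum by lia. simpl pred. simpl (INR 0).
    rewrite Rmult_0_l, Rmult_0_l, Rplus_0_l. reflexivity.
  - rewrite tech5, Nat.sub_diag. simpl (INR 0). rewrite Rmult_0_l, Rmult_0_r, Rplus_0_r.
    apply sum_eq; intros i Hi. replace (S n - i)%nat with (S (n - i)) by lia. reflexivity.
Qed.

Lemma fps_deriv_scale (c : R) (A : fps) :
  fps_deriv (fps_scale c A) = fps_scale c (fps_deriv A).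
Proof. extensionality n. unfold fps_deriv, fps_scale. ring. Qed.

Lemma fps_deriv_pow (G : fps) (k : nat) :
  fps_deriv (fps_pow G (S k)) = fps_scale (INR (S k)) (fps_mul (fps_deriv G) (fps_pow G k)).
Proof.
  induction k as [|k IH].
  - change (fps_pow G 1) with (fps_mul G fps_one). rewrite fps_deriv_mul.
    replace (fps_deriv fps_one) with (fun _ : nat => 0)
      by (extensionality n; unfold fps_deriv; simpl; ring).
    rewrite fps_mul0r.
    extensionality n. unfold fps_add, fps_scale. simpl. ring.
  - change (fps_pow G (S (S k))) with (fps_mul G (fps_pow G (S k))).
    rewrite fps_deriv_mul, IH, fps_mulZr, <- fps_mulA, (fps_mulC G (fps_deriv G)), fps_mulA.
    change (fps_mul G (fps_pow G k)) with (fps_pow G (S k)).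
    extensionality n. unfold fps_add, fps_scale. rewrite (S_INR (S k)). ring.
Qed.

Lemma fps_deriv_exp (G : fps) :
  G O = 0 -> fps_deriv (fps_exp G) = fps_mul (fps_deriv G) (fps_exp G).
Proof.
  intro HG. extensionality n. unfold fps_exp.
  transitivity (sum_f_R0 (fun j => fps_mul (fps_deriv G) (fps_pow G j) n / INR (fact j)) n).
  { unfold fps_deriv at 1. rewrite scal_sum, decomp_sum by lia. simpl pred.
    change (fps_pow G 0 (S n)) with 0. unfold Rdiv. rewrite !Rmult_0_l, Rplus_0_l.
    apply sum_eq; intros j Hj.
    assert (Hpow := f_equal (fun A => A n) (fps_deriv_pow G j)).
    unfold fps_deriv at 1, fps_scale in Hpow. cbv beta in Hpow.
    assert (HS : INR (S j) <> 0) by (apply not_0_INR; lia).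
    assert (HF := INR_fact_neq_0 j).
    change (fact (S j)) with (S j * fact j)%nat. rewrite mult_INR.
    replace (fps_pow G (S j) (S n) * / (INR (S j) * INR (fact j)) * INR (S n))
      with (INR (S n) * fps_pow G (S j) (S n) / (INR (S j) * INR (fact j))) by (field; auto).
    rewrite Hpow. field. auto. }
  unfold fps_mul at 2.
  transitivity (sum_f_R0 (fun i => sum_f_R0
    (fun j => fps_deriv G i * (fps_pow G j (n - i)%nat / INR (fact j))) n) n).
  { rewrite sum_f_R0_swap. apply sum_eq; intros j Hj. unfold fps_mul, Rdiv.
    rewrite Rmult_comm, scal_sum. apply sum_eq; intros; ring. }
  apply sum_eq; intros i Hi. rewrite scal_sum.
  rewrite (sum_f_R0_zero_tail _ (n - i) n); [apply sum_eq; intros; ring|lia|].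
  intros j Hj. rewrite fps_pow_lt by (assumption || lia). unfold Rdiv. ring.
Qed.

Lemma fps_mul_1pqt_mull (q : R) (A B : fps) :
  fps_mul_1pqt q (fps_mul A B) = fps_mul (fps_mul_1pqt q A) B.
Proof.
  extensionality n. unfold fps_mul_1pqt, fps_mul. destruct n as [|n]; [simpl; ring|].
  rewrite (decomp_sum (fun k => A k * _)), (decomp_sum (fun k => (match k with O => _ | _ => _ end) * _))
    by lia.
  simpl pred. rewrite Rplus_assoc. f_equal.
  rewrite scal_sum, <- plus_sum. apply sum_eq; intros i Hi.
  replace (S n - S i)%nat with (n - i)%nat by lia. ring.
Qed.

Lemma fps_mul_1pqt_add (q : R) (A B : fps) :
  fps_mul_1pqt q (fps_add A B) = fps_add (fps_mul_1pqt q A) (fps_mul_1pqt q B).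
Proof. extensionality n. unfold fps_mul_1pqt, fps_add. destruct n; ring. Qed.

Lemma fps_mul_1pqt_scale (q c : R) (A : fps) :
  fps_mul_1pqt q (fps_scale c A) = fps_scale c (fps_mul_1pqt q A).
Proof. extensionality n. unfold fps_mul_1pqt, fps_scale. destruct n; ring. Qed.

Lemma fps_mul_1pqt_deriv_coef (q : R) (Z : fps) (n : nat) :
  fps_mul_1pqt q (fps_deriv Z) n = INR (S n) * Z (S n) + q * INR n * Z n.
Proof. destruct n; unfold fps_mul_1pqt, fps_deriv; simpl; ring. Qed.

(* Coefficientwise, [(1+qt) Z' = F + c Z] is a recursion for [Z (S n)]. *)
Lemma fps_ode_unique (q c : R) (F Z1 Z2 : fps) : Z1 O = Z2 O ->
  fps_mul_1pqt q (fps_deriv Z1) = fps_add F (fps_scale c Z1) ->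
  fps_mul_1pqt q (fps_deriv Z2) = fps_add F (fps_scale c Z2) -> Z1 = Z2.
Proof.
  intros H0 H1 H2. extensionality n. induction n as [|n IH]; [exact H0|].
  apply (f_equal (fun A => A n)) in H1, H2. unfold fps_add, fps_scale in H1, H2.
  rewrite fps_mul_1pqt_deriv_coef in H1, H2.
  apply (Rmult_eq_reg_l (INR (S n))); [|apply not_0_INR; lia].
  rewrite IH in H1. lra.
Qed.

Lemma fps_mul_1pqt_deriv_ln1p (q : R) :
  fps_mul_1pqt q (fps_deriv (fps_ln1p q)) = fps_scale q fps_one.
Proof.
  extensionality n. unfold fps_mul_1pqt, fps_deriv, fps_scale, fps_ln1p.
  destruct n as [|n]; simpl fps_one; [simpl; field|].
  assert (HSS : INR (S (S n)) <> 0) by (apply not_0_INR; lia).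
  assert (HS : INR (S n) <> 0) by (apply not_0_INR; lia).
  simpl pow. field. auto.
Qed.

Lemma fps_mul_1pqt_deriv_exp (q : R) (G : fps) : G O = 0 ->
  fps_mul_1pqt q (fps_deriv (fps_exp G)) =
  fps_mul (fps_mul_1pqt q (fps_deriv G)) (fps_exp G).
Proof. intro HG. rewrite fps_deriv_exp by exact HG. apply fps_mul_1pqt_mull. Qed.

Definition gfact_egf (q c : R) : fps := fun n => gfact c q n / INR (fact n).

Lemma gfact_egf0 (q c : R) : gfact_egf q c O = 1.
Proof. unfold gfact_egf. simpl. field. Qed.

Lemma INR_fact_S (n : nat) : INR (fact (S n)) = INR (S n) * INR (fact n).
Proof. apply mult_INR. Qed.

Lemma gfact_egf_ode (q c : R) :
  fps_mul_1pqt q (fps_deriv (gfact_egf q c)) = fps_scale c (gfact_egf q c).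
Proof.
  extensionality n. rewrite fps_mul_1pqt_deriv_coef.
  unfold fps_scale, gfact_egf. rewrite INR_fact_S. simpl gfact.
  assert (HS : INR (S n) <> 0) by (apply not_0_INR; lia).
  assert (HF := INR_fact_neq_0 n). field. split; assumption.
Qed.

Lemma gfact_egf_ode_unique (q c : R) (Z : fps) : Z O = 1 ->
  fps_mul_1pqt q (fps_deriv Z) = fps_scale c Z -> Z = gfact_egf q c.
Proof.
  intros HZ0 HZ. apply (fps_ode_unique q c (fun _ => 0)).
  - rewrite HZ0, gfact_egf0. reflexivity.
  - rewrite HZ. extensionality n. unfold fps_add. ring.
  - rewrite gfact_egf_ode. extensionality n. unfold fps_add. ring.
Qed.

Lemma gfact_egfD (q c d : R) :
  fps_mul (gfact_egf q c) (gfact_egf q d) = gfact_egf q (c + d).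
Proof.
  apply gfact_egf_ode_unique.
  - unfold fps_mul. simpl. rewrite !gfact_egf0. ring.
  - rewrite fps_deriv_mul, fps_mul_1pqt_add, (fps_mulC (gfact_egf q c)), !fps_mul_1pqt_mull,
      !gfact_egf_ode, !fps_mulZl, (fps_mulC (gfact_egf q d)).
    extensionality n. unfold fps_add, fps_scale. ring.
Qed.

Lemma gfact_egf_at0 (q : R) : gfact_egf q 0 = fps_one.
Proof.
  apply eq_sym, gfact_egf_ode_unique; [reflexivity|].
  extensionality n. rewrite fps_mul_1pqt_deriv_coef. unfold fps_scale.
  destruct n; simpl; ring.
Qed.

Lemma fps_powr_gfact_egf (q a : R) : fps_powr q a = gfact_egf q (a * q).
Proof.
  apply gfact_egf_ode_unique.
  - unfold fps_powr, fps_exp. simpl. field.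
  - unfold fps_powr.
    rewrite fps_mul_1pqt_deriv_exp by (unfold fps_scale, fps_ln1p; ring).
    rewrite fps_deriv_scale, fps_mul_1pqt_scale, fps_mul_1pqt_deriv_ln1p.
    rewrite !fps_mulZl, fps_mul1l. extensionality n. unfold fps_scale. ring.
Qed.

Fixpoint gfact_deriv (y q : R) (n : nat) : R :=
  match n with
  | O => 0
  | S m => gfact_deriv y q m * (y - INR m * q) + gfact y q m
  end.

Definition gfact_deriv_egf (q y : R) : fps := fun n => gfact_deriv y q n / INR (fact n).

Lemma gfact_deriv_egf_ode (q y : R) :
  fps_mul_1pqt q (fps_deriv (gfact_deriv_egf q y)) =
  fps_add (gfact_egf q y) (fps_scale y (gfact_deriv_egf q y)).
Proof.
  extensionality n. rewrite fps_mul_1pqt_deriv_coef.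
  unfold fps_add, fps_scale, gfact_egf, gfact_deriv_egf. rewrite INR_fact_S. simpl gfact_deriv.
  assert (HS : INR (S n) <> 0) by (apply not_0_INR; lia).
  assert (HF := INR_fact_neq_0 n). field. split; assumption.
Qed.

(* Both sides solve [(1+qt) Z' = q E_y + y Z]: the left one since [(1+qt) ln(1+qt)' = q]. *)
Lemma fps_mul_ln1p_gfact_egf (q y : R) :
  fps_mul (fps_ln1p q) (gfact_egf q y) = fps_scale q (gfact_deriv_egf q y).
Proof.
  apply (fps_ode_unique q y (fps_scale q (gfact_egf q y))).
  - unfold fps_mul, fps_scale, gfact_deriv_egf, fps_ln1p. simpl. field.
  - rewrite fps_deriv_mul, fps_mul_1pqt_add, (fps_mulC (fps_ln1p q)), !fps_mul_1pqt_mull,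
      fps_mul_1pqt_deriv_ln1p, gfact_egf_ode, !fps_mulZl, fps_mul1l, (fps_mulC (gfact_egf q y)).
    extensionality n. unfold fps_add, fps_scale. ring.
  - rewrite fps_deriv_scale, fps_mul_1pqt_scale, gfact_deriv_egf_ode.
    extensionality n. unfold fps_add, fps_scale. ring.
Qed.

Lemma is_derive_gfact (q y : R) (n : nat) :
  is_derive (fun y => gfact y q n) y (gfact_deriv y q n).
Proof.
  induction n as [|n IH]; simpl.
  - apply (is_derive_const 1 y).
  - replace (gfact_deriv y q n * (y - INR n * q) + gfact y q n)
      with (gfact_deriv y q n * (y - INR n * q) + gfact y q n * 1) by ring.
    apply (is_derive_mult (fun y => gfact y q n) (fun y => y - INR n * q)); [exact IH| |].
    + auto_derive; [exact I|ring].
    + intros; apply Rmult_comm.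
Qed.

Lemma continuous_gfact_deriv (q y : R) (n : nat) : continuous (fun y => gfact_deriv y q n) y.
Proof.
  induction n as [|n IH]; simpl; [apply continuous_const|].
  apply (continuous_plus (fun y => gfact_deriv y q n * (y - INR n * q)) (fun y => gfact y q n)).
  - apply (continuous_mult (fun y => gfact_deriv y q n) (fun y => y - INR n * q)); [exact IH|].
    apply (@ex_derive_continuous R_AbsRing R_NormedModule). auto_derive. exact I.
  - apply (@ex_derive_continuous R_AbsRing R_NormedModule). eexists. apply is_derive_gfact.
Qed.

Lemma is_RInt_gfact_deriv (q r : R) (n : nat) :
  is_RInt (fun x => gfact_deriv (- x + r) q n) 0 1 (gfact r q n - gfact (r + -1) q n).
Proof.
  assert (Hval : gfact r q n - gfact (r + -1) q n =
    minus ((fun x => - gfact (- x + r) q n) 1) ((fun x => - gfact (- x + r) q n) 0)).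
  { unfold minus, plus, opp; simpl.
    replace (- (1) + r) with (r + -1) by ring. replace (- 0 + r) with r by ring. lra. }
  rewrite Hval. apply (@is_RInt_derive R_CompleteNormedModule (fun x => - gfact (- x + r) q n)).
  - intros x _.
    replace (gfact_deriv (- x + r) q n) with (- (-1 * gfact_deriv (- x + r) q n)) by ring.
    apply (@is_derive_opp R_AbsRing R_NormedModule).
    apply (is_derive_comp (fun y => gfact y q n) (fun x => - x + r)); [apply is_derive_gfact|].
    auto_derive; [exact I|ring].
  - intros x _. apply (continuous_comp (fun x => - x + r) (fun y => gfact_deriv y q n)).
    + apply (@ex_derive_continuous R_AbsRing R_NormedModule). auto_derive. exact I.
    + apply continuous_gfact_deriv.
Qed.

Lemma is_RInt_sum_f_R0 (f : nat -> R -> R) (I : nat -> R) (a b : R) (n : nat) :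
  (forall k, is_RInt (f k) a b (I k)) ->
  is_RInt (fun x => sum_f_R0 (fun k => f k x) n) a b (sum_f_R0 I n).
Proof.
  intro Hf. induction n as [|n IH]; [exact (Hf 0%nat)|].
  apply (@is_RInt_plus R_NormedModule _ _ a b _ _ IH (Hf (S n))).
Qed.

Lemma is_RInt_chat (q r : R) (n : nat) :
  is_RInt (fun x => gfact (- x + r) q n) 0 1 (chat q n r).
Proof.
  unfold chat. rewrite <- RInt_Reals.
  apply (@RInt_correct R_CompleteNormedModule), ex_RInt_Reals_1, gfact_integrable.
Qed.

Lemma is_RInt_mul_gfact_egf (q r : R) (B : fps) (n : nat) :
  is_RInt (fun x => fps_mul (gfact_egf q (- x + r)) B n) 0 1 (fps_mul (egf_chat q r) B n).
Proof.
  apply is_RInt_sum_f_R0. intro k. unfold gfact_egf, egf_chat.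
  replace (fun x => gfact (- x + r) q k / INR (fact k) * B (n - k)%nat)
    with (fun x => scal (B (n - k)%nat / INR (fact k)) (gfact (- x + r) q k))
    by (extensionality x; unfold scal; simpl; unfold mult; simpl; unfold Rdiv; ring).
  replace (chat q k r / INR (fact k) * B (n - k)%nat)
    with (scal (B (n - k)%nat / INR (fact k)) (chat q k r))
    by (unfold scal; simpl; unfold mult; simpl; unfold Rdiv; ring).
  apply (@is_RInt_scal R_NormedModule), is_RInt_chat.
Qed.

Lemma egf_chat_mul_ln1p (q r : R) :
  fps_mul (egf_chat q r) (fps_ln1p q) =
  fps_scale q (fps_add (gfact_egf q r) (fps_opp (gfact_egf q (r + -1)))).
Proof.
  extensionality n.
  transitivity (RInt (fun x => fps_mul (gfact_egf q (- x + r)) (fps_ln1p q) n) 0 1).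
  { symmetry. apply (@is_RInt_unique R_CompleteNormedModule), is_RInt_mul_gfact_egf. }
  apply (@is_RInt_unique R_CompleteNormedModule).
  replace (fun x => fps_mul (gfact_egf q (- x + r)) (fps_ln1p q) n)
    with (fun x => scal (q / INR (fact n)) (gfact_deriv (- x + r) q n)).
  2: { extensionality x. rewrite fps_mulC, fps_mul_ln1p_gfact_egf.
       unfold scal, fps_scale, gfact_deriv_egf; simpl; unfold mult; simpl. unfold Rdiv. ring. }
  replace (fps_scale q (fps_add (gfact_egf q r) (fps_opp (gfact_egf q (r + -1)))) n)
    with (scal (q / INR (fact n)) (gfact r q n - gfact (r + -1) q n))
    by (unfold scal, fps_scale, fps_add, fps_opp, gfact_egf; simpl; unfold mult; simpl;
        unfold Rdiv; ring).
  apply (@is_RInt_scal R_NormedModule), is_RInt_gfact_deriv.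
Qed.

Lemma fps_div_mul_shift (A B : fps) :
  fps_shift B O <> 0 -> fps_mul (fps_div A B) (fps_shift B) = fps_shift A.
Proof.
  intro HB. unfold fps_div.
  rewrite fps_mulA, (fps_mulC (fps_inv _)), fps_mul_inv_r, fps_mul1r by exact HB.
  reflexivity.
Qed.

Lemma egf_chat_closed_form (q r : R) : q <> 0 ->
  egf_chat q r =
  fps_scale q (fps_mul (gfact_egf q r)
    (fps_div (fps_add fps_one (fps_opp (gfact_egf q (-1)))) (fps_ln1p q))).
Proof.
  intro hq. set (A := fps_add fps_one (fps_opp (gfact_egf q (-1)))).
  assert (HL0 : fps_ln1p q O = 0) by reflexivity.
  assert (HA0 : A O = 0) by (unfold A, fps_add, fps_opp; rewrite gfact_egf0; simpl; ring).
  assert (HB0 : fps_shift (fps_ln1p q) O <> 0)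
    by (unfold fps_shift, fps_ln1p; simpl; replace (1 * (q * 1) / 1) with q by field; exact hq).
  apply (fps_mulIr _ _ _ HB0).
  rewrite fps_mul_shift, egf_chat_mul_ln1p by exact HL0.
  rewrite fps_mulZl, fps_mulA, fps_div_mul_shift, fps_mul_shift by assumption.
  unfold A. rewrite fps_mulDr, fps_mulNr, fps_mul1r, gfact_egfD.
  reflexivity.
Qed.

Theorem mainTheorem4 (q r : R) (hq : q <> 0) :
  egf_chat q r =
    fps_scale q
      (fps_mul (fps_powr q (r / q))
         (fps_div (fps_add fps_one (fps_opp (fps_powr q (- (1 / q)))))
                  (fps_ln1p q)))
  /\
  egf_chat q 0 =
    fps_scale q
      (fps_div (fps_add fps_one (fps_opp (fps_powr q (- (1 / q)))))
               (fps_ln1p q)).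
Proof.
  rewrite !fps_powr_gfact_egf.
  replace (r / q * q) with r by (field; exact hq).
  replace (- (1 / q) * q) with (-1) by (field; exact hq).
  split; rewrite egf_chat_closed_form by exact hq; [reflexivity|].
  rewrite gfact_egf_at0, fps_mul1l. reflexivity.
Qed.
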